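(* Let $(T,X)$ be a non-minimal M-dynamic ($T$ a topological group or monoid, $X$ a Hausdorff uniform space, not necessarily compact). Then $(T,X)$ is sensitive to initial conditions on $X$.
   Context: $\mathscr U_X$ is a compatible symmetric uniformity of $X$. $A\subseteq T$ is syndetic if there is compact $K\subseteq T$ with $Kt\cap A\ne\emptyset$ for all $t$. A point $x$ is a.p. if $\{t:tx\in U\}$ is syndetic for every neighborhood $U$ of $x$. The dynamic is topologically transitive if $\{t:V\cap tU\ne\emptyset\}\ne\emptyset$ for all nonempty open $U,V$; it is an M-dynamic if it is topologically transitive with a dense set of a.p. points. Minimal means every orbit is dense. Sensitive to initial conditions on $X$: there is $\varepsilon\in\mathscr U_X$ such that for every $x\in X$ and every neighborhood $U$ of $x$ there exist $y\in U$ and $t\in T$ with $(tx,ty)\notin\varepsilon$. *)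

From mathcomp Require Import all_boot all_order all_algebra.
From mathcomp Require Import all_classical all_reals all_analysis.
Set Implicit Arguments. Unset Strict Implicit. Unset Printing Implicit Defensive.
Local Open Scope classical_set_scope.

Definition topological_monoid (T : topologicalType) (mul : T -> T -> T) (e : T) :=
  [/\ forall a b c, mul a (mul b c) = mul (mul a b) c,
      forall a, mul e a = a,
      forall a, mul a e = a &
      continuous (fun p : T * T => mul p.1 p.2)].

Definition is_dynamic (T : topologicalType) (X : topologicalType)
  (mul : T -> T -> T) (e : T) (act : T -> X -> X) :=
  [/\ topological_monoid mul e,
      forall x, act e x = x,
      forall s t x, act (mul s t) x = act s (act t x) &
      continuous (fun p : T * X => act p.1 p.2)].

Definition syndetic (T : topologicalType) (mul : T -> T -> T) (A : set T) :=
  exists K : set T, compact K /\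
    forall t, (fun k => mul k t) @` K `&` A !=set0.

Definition ap_point (T : topologicalType) (X : topologicalType)
  (mul : T -> T -> T) (act : T -> X -> X) (x : X) :=
  forall U : set X, nbhs x U -> syndetic mul [set t | U (act t x)].

Definition top_transitive (T : topologicalType) (X : topologicalType)
  (act : T -> X -> X) :=
  forall U V : set X, open U -> U !=set0 -> open V -> V !=set0 ->
    [set t | V `&` (act t @` U) !=set0] !=set0.

Definition M_dynamic (T : topologicalType) (X : topologicalType)
  (mul : T -> T -> T) (act : T -> X -> X) :=
  top_transitive act /\ dense [set x | ap_point mul act x].

Definition minimal_dynamic (T : topologicalType) (X : topologicalType)
  (act : T -> X -> X) :=
  forall x : X, dense (range (fun t => act t x)).

Definition sensitive (T : topologicalType) (X : uniformType)
  (act : T -> X -> X) :=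
  exists eps : set (X * X),
    [/\ entourage eps, (forall a b, eps (a, b) -> eps (b, a)) &
      forall (x : X) (U : set X), nbhs x U ->
        exists y t, U y /\ ~ eps (act t x, act t y)].

From mathcomp Require Import all_boot all_order all_algebra.
From mathcomp Require Import all_classical all_reals all_analysis.
Local Open Scope classical_set_scope.

(* Non-minimality yields a point x0 and an open set W around some w that the
   orbit of x0 never enters.  Take p almost periodic close to a given x.  If
   the orbit of p stays away from w, transitivity moves a point next to p
   into W, separating it from p.  If instead t0 p comes close to w, the
   syndetic set of returns of p near p is translated by a compact K, and
   equicontinuity of K on a neighborhood of x0 lets transitivity bring a
   point z near p close to x0 along the whole of K: some return time then
   sends p near w while z follows x0 and stays away from w. *)

Lemma equicontinuous_compact_sections {T X : topologicalType} {Y : uniformType}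
    {f : T * X -> Y} {K : set T} :
  continuous f -> compact K -> forall (q : X) (E : set (Y * Y)), entourage E ->
  \forall u \near q, forall k, K k -> E (f (k, q), f (k, u)).
Proof.
move=> cf /compact_near_coveringP cK q E eE.
pose G := split_ent E `&` (split_ent E)^-1%relation.
have eG : entourage G by exact/entourage_invI/entourage_split_ent.
apply: (cK X (nbhs q) (fun u k => E (f (k, q), f (k, u)))) => k Kk.
have /cvg_app_entourageP /(_ G eG) [[A B] /= [nA nB] AB] := cf (k, q).
exists (A, B) => // -[k' u] /= [Ak' Bu].
have [_ Gq] : G (f (k, q), f (k', q)) by apply: (AB (k', q)); split => //;
  exact: nbhs_singleton.
have [Gu _] : G (f (k, q), f (k', u)) by exact: (AB (k', u)).
exact: (entourage_split (f (k, q))).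
Qed.

Definition pair_sensitive {T : topologicalType} {X : uniformType}
    (act : T -> X -> X) (delta : set (X * X)) :=
  forall (x : X) (U : set X), nbhs x U ->
    exists y1 y2 t, [/\ U y1, U y2 & ~ delta (act t y1, act t y2)].

Lemma pair_sensitive_sensitive {T : topologicalType} {X : uniformType}
    {act : T -> X -> X} {delta : set (X * X)} :
  entourage delta -> pair_sensitive act delta -> sensitive act.
Proof.
move=> edelta sep; pose S := split_ent delta.
have eS : entourage S by exact: entourage_split_ent.
exists (S `&` S^-1%relation); split; first exact: entourage_invI.
  by move=> a b [].
move=> x U /sep [y1 [y2 [t [Uy1 Uy2 ndelta]]]].
have [[_ Sy1x]|Sxy1] := pselect ((S `&` S^-1%relation) (act t x, act t y1)).
  exists y2, t; split => // -[Sxy2 _]; apply: ndelta.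
  exact: (entourage_split (act t x)).
by exists y1, t.
Qed.

Lemma top_transitive_nbhs {T X : topologicalType} {act : T -> X -> X}
    {U V : set X} {u w : X} :
  top_transitive act -> open U -> U u -> nbhs w V ->
  exists t z, U z /\ V (act t z).
Proof.
move=> tr oU Uu nV.
have V0w : V° w by apply: nbhs_singleton; exact: nbhs_interior.
have [t [v [Vv [z Uz zv]]]] :=
  tr U V° oU (ex_intro _ u Uu) (@open_interior _ V) (ex_intro _ w V0w).
by exists t, z; split => //; apply: interior_subset; rewrite zv.
Qed.

Lemma non_minimal_orbit_avoids (T : topologicalType) (X : uniformType)
    (act : T -> X -> X) :
  ~ minimal_dynamic act ->
  exists x0 w (D : set (X * X)), entourage D /\ forall t, ~ D (w, act t x0).
Proof.
move=> /existsNP [x0 /denseNE [W [[w oW] Wrange]]].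
have /nbhsP [D eD DW] : nbhs w W by exact: open_nbhs_nbhs.
exists x0, w, D; split => // t Dwt.
have : (W `&` range (fun t => act t x0)) (act t x0).
  by split; [exact/DW/xsectionP | exists t].
by rewrite Wrange.
Qed.

Section NonMinimalMDynamic.
Context {T : topologicalType} {X : uniformType}.
Context {mul : T -> T -> T} {e : T} {act : T -> X -> X}.
Hypothesis dyn : is_dynamic mul e act.
Hypothesis tr : top_transitive act.

Lemma act_continuous t : continuous (act t).
Proof.
case: dyn => _ _ _ cact u.
apply: (@continuous_comp _ _ _ (pair t) (fun p : T * X => act p.1 p.2)).
  exact: (cvg_pair (cvg_cst t) cvg_id).
exact: cact.
Qed.

Context {x0 w : X} {D : set (X * X)}.
Hypothesis eD : entourage D.
Hypothesis orbit_avoids : forall t, ~ D (w, act t x0).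

Let D1 := split_ent D.
Let D2 := split_ent D1.
Let D3 := split_ent D2.

Let eD1 : entourage D1. Proof. exact: entourage_split_ent. Qed.
Let eD2 : entourage D2. Proof. exact: entourage_split_ent. Qed.
Let eD3 : entourage D3. Proof. exact: entourage_split_ent. Qed.

Lemma far_orbit_separated {U : set X} {p : X} :
  open U -> U p -> (forall t, ~ D1 (w, act t p)) ->
  exists z t, U z /\ ~ D3 (act t z, act t p).
Proof.
move=> oU Up far.
have [t [z [Uz /xsectionP D2w]]] :=
  top_transitive_nbhs tr oU Up (nbhs_entourage w eD2).
exists z, t; split => // D3zp; apply: (far t).
by apply: (entourage_split (act t z)) => //; exact: split_ent_subset.
Qed.

Lemma near_orbit_separated {U : set X} {p : X} {t0 : T} :
  open U -> U p -> ap_point mul act p -> D1 (w, act t0 p) ->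
  exists z t, U z /\ ~ D3 (act t p, act t z).
Proof.
move=> oU Up app D1w.
case: (dyn) => _ _ actM cact.
have nV : nbhs p [set u | D3 (act t0 p, act t0 u)].
  by have /cvg_app_entourageP := act_continuous t0 p; apply.
have [K [cK returns]] := app _ nV.
pose f (pr : T * X) := act t0 (act pr.1 pr.2).
have cf : continuous f.
  by move=> pr; apply: continuous_comp; [exact: cact | exact: act_continuous].
have nO : nbhs x0 [set u | forall k, K k -> D2 (f (k, u), f (k, x0))].
  exact: (equicontinuous_compact_sections cf cK x0 _ (entourage_inv eD2)).
have [s [z [Uz O_sz]]] := top_transitive_nbhs tr oU Up nO.
have [_ [[k Kk <-] D3p]] := returns s.
exists z, (mul t0 (mul k s)); split => // D3pz.
apply: (orbit_avoids (mul t0 k)); rewrite actM.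
apply: (entourage_split (act t0 p) eD) => //.
apply: (entourage_split (f (k, act s z)) eD1); last exact: O_sz.
apply: (entourage_split (act (mul t0 (mul k s)) p) eD2); first by rewrite actM.
by move: D3pz; rewrite /f /= !actM.
Qed.

Lemma m_dynamic_pair_sensitive :
  dense [set x | ap_point mul act x] ->
  exists2 delta, entourage delta & pair_sensitive act delta.
Proof.
move=> dap; exists D3 => // x U nU.
have oU : open U° by exact: open_interior.
have [p [Up app]] : (U° `&` [set x | ap_point mul act x]) !=set0.
  by apply: dap => //; exists x; apply: nbhs_singleton; exact: nbhs_interior.
have UU := @interior_subset _ U.
have [[t0 D1w]|far] := pselect (exists t0, D1 (w, act t0 p)).
- have [z [t [Uz nD3]]] := near_orbit_separated oU Up app D1w.
  by exists p, z, t; split; [exact: UU | exact: UU |].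
- have [z [t [Uz nD3]]] := far_orbit_separated oU Up (proj2 (forallNP _) far).
  by exists z, p, t; split; [exact: UU | exact: UU |].
Qed.

End NonMinimalMDynamic.

Theorem theorem4 (T : topologicalType) (X : uniformType)
  (mul : T -> T -> T) (e : T) (act : T -> X -> X) :
  hausdorff_space X ->
  is_dynamic mul e act ->
  M_dynamic mul act ->
  ~ minimal_dynamic act ->
  sensitive act.
Proof.
move=> _ dyn [tr dap] /non_minimal_orbit_avoids [x0 [w [D [eD avoids]]]].
have [delta edelta sep] := m_dynamic_pair_sensitive dyn tr eD avoids dap.
exact: pair_sensitive_sensitive edelta sep.
Qed.
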